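(* Let $C:=\sqrt{\frac{15+\sqrt{65}}{8}}$ and let $g:\mathbb{R}\to\mathbb{R}$ be $$g(z):=-\frac{2}{5}z^4+\frac{8}{5}Cz^3+\Big(\frac32-\frac{12}{5}C^2\Big)z^2+\Big(\frac85C^3-3C\Big)z+1 .$$ For $W=[w_1,w_2,w_3]$ with $w_1,w_2,w_3\in\mathbb{R}^3$ and $b=[b_1,b_2,b_3]\in\mathbb{R}^3$, define $f(\cdot;W):\mathbb{R}^3\to\mathbb{R}^3$ by $f(x;W):=[g(\langle w_1,x\rangle+b_1),g(\langle w_2,x\rangle+b_2),g(\langle w_3,x\rangle+b_3)]^\top$. Then there exist such $W$ and $b$ for which $f(\cdot;W)$ has two distinct fixed points $p_1,p_2\in\mathbb{R}^3$ such that for each $i\in\{1,2\}$ there exist constants $\epsilon_i>0$, $c_i>0$ and $K_i\in[0,1)$ with the following property: for every initial point $x^{(0)}\in\prod_{j=1}^3[p_{i,j}-\epsilon_i,p_{i,j}+\epsilon_i]$, the fixed-point iteration $x^{(t)}=f(x^{(t-1)};W)$ ($t\ge1$) converges to $p_i$, and for every $t\ge2$, $$\|x^{(t)}-p_i\|_\infty\le K_i^t\cdot c_i\epsilon_i .$$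
   Context: $p_{i,j}$ denotes the $j$-th coordinate of $p_i$; $\|\cdot\|_\infty$ is the $\ell_\infty$ norm. A fixed point of $F$ is a point $p$ with $F(p)=p$. *)

From Stdlib Require Import Reals.
Open Scope R_scope.

Record vec3 := mk3 { v1 : R ; v2 : R ; v3 : R }.

Definition inner (w x : vec3) : R := v1 w * v1 x + v2 w * v2 x + v3 w * v3 x.

Definition vsub (x y : vec3) : vec3 := mk3 (v1 x - v1 y) (v2 x - v2 y) (v3 x - v3 y).

Definition norm_inf (x : vec3) : R := Rmax (Rabs (v1 x)) (Rmax (Rabs (v2 x)) (Rabs (v3 x))).

Definition Cst : R := sqrt ((15 + sqrt 65) / 8).

Definition g (z : R) : R :=
  - (2/5) * z ^ 4 + (8/5) * Cst * z ^ 3 + (3/2 - (12/5) * Cst ^ 2) * z ^ 2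
  + ((8/5) * Cst ^ 3 - 3 * Cst) * z + 1.

Definition fW (w1 w2 w3 b : vec3) (x : vec3) : vec3 :=
  mk3 (g (inner w1 x + v1 b)) (g (inner w2 x + v2 b)) (g (inner w3 x + v3 b)).

Definition iterate (F : vec3 -> vec3) (t : nat) (x0 : vec3) : vec3 := Nat.iter t F x0.

Definition in_box (p : vec3) (eps : R) (x : vec3) : Prop :=
  p.(v1) - eps <= x.(v1) <= p.(v1) + eps /\
  p.(v2) - eps <= x.(v2) <= p.(v2) + eps /\
  p.(v3) - eps <= x.(v3) <= p.(v3) + eps.

Definition converges_to (u : nat -> vec3) (p : vec3) : Prop :=
  forall e, 0 < e -> exists N, forall t, (N <= t)%nat -> norm_inf (vsub (u t) p) < e.

Definition locally_linearly_attracting (F : vec3 -> vec3) (p : vec3) : Prop :=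
  exists eps c K, 0 < eps /\ 0 < c /\ 0 <= K < 1 /\
    forall x0, in_box p eps x0 ->
      converges_to (fun t => iterate F t x0) p /\
      forall t, (2 <= t)%nat -> norm_inf (vsub (iterate F t x0) p) <= K ^ t * c * eps.

(* With C^2 = (15 + sqrt 65)/8 the number C is a root of 4C^4 - 15C^2 + 10, which is exactly
   what makes g the even quartic q(u) = -2/5 u^4 + 3/2 u^2 shifted to C.  Taking W = a I with
   a = 135/142 and b = (C, C, C), the map f acts coordinatewise by h(x) = q(a x), whose fixed
   points 0 and 568/405 are both attracting: near each of them h - id factors as (x - p) r(x)
   with |r| <= 1/2, so every coordinate, hence the sup-norm error, halves at each step. *)

From Stdlib Require Import Reals Lra Psatz FunctionalExtensionality.
Open Scope R_scope.

Lemma Rabs_le_between x a : Rabs x <= a -> - a <= x <= a.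
Proof. unfold Rabs; destruct Rcase_abs; lra. Qed.

Lemma Rabs_mult_le_r d r K : Rabs r <= K -> Rabs (d * r) <= K * Rabs d.
Proof.
  intros Hr; rewrite Rabs_mult, Rmult_comm.
  apply Rmult_le_compat_r; [apply Rabs_pos | exact Hr].
Qed.

Definition contracts_towards (h : R -> R) (p eps K : R) : Prop :=
  forall x, Rabs (x - p) <= eps -> Rabs (h x - p) <= K * Rabs (x - p).

Section LocalContraction.

Variables (h : R -> R) (p eps K : R).
Hypothesis (HK : 0 <= K <= 1) (Hh : contracts_towards h p eps K).

Lemma contracts_towards_fixed : 0 <= eps -> h p = p.
Proof.
  intros Heps.
  assert (Hp : Rabs (p - p) <= eps) by (rewrite Rminus_diag, Rabs_R0; exact Heps).
  specialize (Hh p Hp); rewrite Rminus_diag, Rabs_R0, Rmult_0_r in Hh.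
  apply Rabs_le_between in Hh; lra.
Qed.

Lemma iter_contracts_towards t y :
  Rabs (y - p) <= eps -> Rabs (Nat.iter t h y - p) <= K ^ t * Rabs (y - p).
Proof.
  revert y; induction t as [| t IH]; intros y Hy; [simpl; lra |].
  rewrite Nat.iter_succ_r.
  assert (Hstep := Hh y Hy).
  assert (Hy' : Rabs (h y - p) <= eps) by (pose proof (Rabs_pos (y - p)); nra).
  pose proof (IH _ Hy'); pose proof (pow_le K t (proj1 HK)); simpl; nra.
Qed.

End LocalContraction.

Definition vmap (h : R -> R) (x : vec3) : vec3 := mk3 (h (v1 x)) (h (v2 x)) (h (v3 x)).

Lemma iterate_vmap h t x : iterate (vmap h) t x = vmap (Nat.iter t h) x.
Proof.
  unfold iterate; induction t as [| t IH]; [now destruct x |].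
  simpl; rewrite IH; reflexivity.
Qed.

Lemma vmap_fixed h p : h p = p -> vmap h (mk3 p p p) = mk3 p p p.
Proof. intros Hp; unfold vmap; simpl; rewrite Hp; reflexivity. Qed.

Lemma converges_to_of_geometric_bound u p K c : 0 <= K < 1 -> 0 <= c ->
  (forall t, norm_inf (vsub (u t) p) <= K ^ t * c) -> converges_to u p.
Proof.
  intros HK Hc Hu e He.
  destruct (pow_lt_1_zero K) with (y := e / (c + 1)) as [N HN].
  - rewrite Rabs_right; lra.
  - apply Rdiv_lt_0_compat; lra.
  - exists N; intros t Ht.
    specialize (HN t Ht); rewrite Rabs_right in HN by (apply Rle_ge, pow_le; lra).
    apply Rmult_lt_compat_r with (r := c + 1) in HN; [| lra].
    replace (e / (c + 1) * (c + 1)) with e in HN by (field; lra).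
    pose proof (Hu t); pose proof (pow_le K t (proj1 HK)); nra.
Qed.

Lemma vmap_attracting h p eps K : 0 < eps -> 0 <= K < 1 ->
  contracts_towards h p eps K -> locally_linearly_attracting (vmap h) (mk3 p p p).
Proof.
  intros Heps HK Hh; exists eps, 1, K; do 3 (split; [lra |]).
  intros x0 [B1 [B2 B3]]; simpl in B1, B2, B3.
  assert (Hcoord : forall t y, p - eps <= y <= p + eps -> Rabs (Nat.iter t h y - p) <= K ^ t * eps).
  { intros t y Hy.
    assert (Hy' : Rabs (y - p) <= eps) by (apply Rabs_le; lra).
    pose proof (iter_contracts_towards h p eps K ltac:(lra) Hh t y Hy').
    pose proof (pow_le K t (proj1 HK)); nra. }
  assert (Hbound : forall t, norm_inf (vsub (iterate (vmap h) t x0) (mk3 p p p)) <= K ^ t * eps).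
  { intro t; rewrite iterate_vmap; unfold norm_inf, vsub; simpl.
    repeat apply Rmax_lub; apply Hcoord; assumption. }
  split.
  - apply (converges_to_of_geometric_bound _ _ K eps HK ltac:(lra) Hbound).
  - intros t _; rewrite Rmult_1_r; apply Hbound.
Qed.

Definition g_centered (u : R) : R := - (2/5) * u ^ 4 + 3/2 * u ^ 2.

Lemma Cst_quartic_root : 4 * Cst ^ 4 - 15 * Cst ^ 2 + 10 = 0.
Proof.
  pose proof (sqrt_pos 65).
  assert (HC : Cst * Cst = (15 + sqrt 65) / 8) by (unfold Cst; apply sqrt_sqrt; lra).
  assert (H65 : sqrt 65 * sqrt 65 = 65) by (apply sqrt_sqrt; lra).
  replace (Cst ^ 4) with ((Cst * Cst) * (Cst * Cst)) by ring.
  replace (Cst ^ 2) with (Cst * Cst) by ring.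
  rewrite HC; nra.
Qed.

Lemma g_shift z : g z = g_centered (z - Cst).
Proof.
  assert (Hdiff : g z - g_centered (z - Cst) = (4 * Cst ^ 4 - 15 * Cst ^ 2 + 10) / 10)
    by (unfold g, g_centered; field).
  rewrite Cst_quartic_root in Hdiff; lra.
Qed.

Definition coord_map (x : R) : R := g_centered (135/142 * x).

Lemma coord_map_contracts_0 : contracts_towards coord_map 0 (1/10) (1/2).
Proof.
  intros x Hx; rewrite !Rminus_0_r in *; apply Rabs_le_between in Hx.
  replace (coord_map x)
    with (x * (- (2/5) * (135/142) ^ 4 * x ^ 3 + 3/2 * (135/142) ^ 2 * x))
    by (unfold coord_map, g_centered; ring).
  apply Rabs_mult_le_r, Rabs_le; split; nra.
Qed.

Lemma coord_map_contracts_568_405 : contracts_towards coord_map (568/405) (1/100) (1/2).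
Proof.
  (* the cofactor is the difference quotient at 568/405; its constant term is the derivative 14/71 *)
  intros x Hx; set (d := x - 568/405) in *; apply Rabs_le_between in Hx.
  replace (coord_map x - 568/405)
    with (d * (14/71 - 100845/40328 * d - 656100/357911 * d ^ 2 - 66430125/203293448 * d ^ 3))
    by (unfold d, coord_map, g_centered; field).
  apply Rabs_mult_le_r, Rabs_le; split; nra.
Qed.

Lemma fW_diagonal a :
  fW (mk3 a 0 0) (mk3 0 a 0) (mk3 0 0 a) (mk3 Cst Cst Cst) = vmap (fun x => g_centered (a * x)).
Proof.
  apply functional_extensionality; intro x.
  unfold fW, vmap, inner; simpl; rewrite !g_shift; f_equal; f_equal; ring.
Qed.

Theorem lemmaB5 :
  exists (w1 w2 w3 b p1 p2 : vec3),
    fW w1 w2 w3 b p1 = p1 /\ fW w1 w2 w3 b p2 = p2 /\ p1 <> p2 /\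
    locally_linearly_attracting (fW w1 w2 w3 b) p1 /\
    locally_linearly_attracting (fW w1 w2 w3 b) p2.
Proof.
  exists (mk3 (135/142) 0 0), (mk3 0 (135/142) 0), (mk3 0 0 (135/142)), (mk3 Cst Cst Cst),
    (mk3 0 0 0), (mk3 (568/405) (568/405) (568/405)).
  rewrite fW_diagonal; fold coord_map.
  split; [apply vmap_fixed, (contracts_towards_fixed _ _ _ _ coord_map_contracts_0); lra |].
  split; [apply vmap_fixed, (contracts_towards_fixed _ _ _ _ coord_map_contracts_568_405); lra |].
  split; [intro E; injection E; lra |].
  split.
  - exact (vmap_attracting coord_map 0 (1/10) (1/2) ltac:(lra) ltac:(lra) coord_map_contracts_0).
  - exact (vmap_attracting coord_map (568/405) (1/100) (1/2) ltac:(lra) ltac:(lra)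
      coord_map_contracts_568_405).
Qed.
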